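(* Let $(A,\dashv,\vdash,\perp)$ be an associative trialgebra. Define $$[x,y]:=x\dashv y-y\vdash x\qquad\text{and}\qquad xy:=x\perp y.$$ Then the following hold. (i) The product $xy$ is associative. (ii) The bracket satisfies the (right) Leibniz identity $[[x,y],z]=[[x,z],y]+[x,[y,z]]$. (iii) For all $x,y,z\in A$, $$[xy,z]=x[y,z]+[x,z]y\qquad\text{and}\qquad [x,\,yz-zy]=[x,[y,z]].$$ That is, $(A,xy,[\,,\,])$ is a noncommutative Poisson algebra.
   Context: Let $K$ be a field. An associative trialgebra is a $K$-vector space $A$ with three bilinear operations $\dashv,\vdash,\perp$ satisfying for all $x,y,z\in A$ the following 11 relations: (1) $(x\dashv y)\dashv z=x\dashv(y\dashv z)$; (2) $(x\dashv y)\dashv z=x\dashv(y\vdash z)$; (3) $(x\vdash y)\dashv z=x\vdash(y\dashv z)$; (4) $(x\dashv y)\vdash z=x\vdash(y\vdash z)$; (5) $(x\vdash y)\vdash z=x\vdash(y\vdash z)$; (6) $(x\dashv y)\dashv z=x\dashv(y\perp z)$; (7) $(x\perp y)\dashv z=x\perp(y\dashv z)$; (8) $(x\dashv y)\perp z=x\perp(y\vdash z)$; (9) $(x\vdash y)\perp z=x\vdash(y\perp z)$; (10) $(x\perp y)\vdash z=x\vdash(y\vdash z)$; (11) $(x\perp y)\perp z=x\perp(y\perp z)$. *)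

From mathcomp Require Import all_boot all_algebra.
Set Implicit Arguments. Unset Strict Implicit. Unset Printing Implicit Defensive.
Import GRing.Theory.
Local Open Scope ring_scope.

Definition bilinear_op (K : fieldType) (A : lmodType K) (op : A -> A -> A) : Prop :=
  (forall (a : K) (x y z : A), op (a *: x + y) z = a *: op x z + op y z) /\
  (forall (a : K) (x y z : A), op x (a *: y + z) = a *: op x y + op x z).

(* Associative trialgebra: (A, dashv (left), vdash (right), perp (middle))
   satisfying the 11 relations of the paper. *)
Definition assoc_trialgebra (K : fieldType) (A : lmodType K)
  (l r m : A -> A -> A) : Prop :=
  bilinear_op l /\ bilinear_op r /\ bilinear_op m /\
  forall x y z : A,
  (    l (l x y) z = l x (l y z)  /\
      l (l x y) z = l x (r y z)  /\
      l (r x y) z = r x (l y z)  /\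
      r (l x y) z = r x (r y z)  /\
      r (r x y) z = r x (r y z)  /\
      l (l x y) z = l x (m y z)  /\
      l (m x y) z = m x (l y z)  /\
      m (l x y) z = m x (r y z)  /\
      m (r x y) z = r x (m y z)  /\
      r (m x y) z = r x (r y z)  /\
      m (m x y) z = m x (m y z)).

From mathcomp Require Import all_boot all_algebra.
Local Open Scope ring_scope.
Import GRing.Theory.

(* Expanding the bracket by bilinearity, each identity becomes a sum of
   monomials in the three operations; rewriting with the defining relations
   brings both sides to the same monomials, which then cancel in pairs. *)

Set Implicit Arguments.
Unset Strict Implicit.
Unset Printing Implicit Defensive.

Section BilinearOp.
Variables (K : fieldType) (A : lmodType K) (op : A -> A -> A).
Hypothesis op_bilinear : bilinear_op op.

Lemma bilinear_opBl (x y z : A) : op (x - y) z = op x z - op y z.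
Proof.
by case: op_bilinear => opZDl _; rewrite -scaleN1r addrC opZDl scaleN1r addrC.
Qed.

Lemma bilinear_opBr (x y z : A) : op x (y - z) = op x y - op x z.
Proof.
by case: op_bilinear => _ opZDr; rewrite -scaleN1r addrC opZDr scaleN1r addrC.
Qed.

End BilinearOp.

Lemma forall3_and (T : Type) (P Q : T -> T -> T -> Prop) :
  (forall x y z, P x y z /\ Q x y z) ->
  (forall x y z, P x y z) /\ (forall x y z, Q x y z).
Proof. by move=> PQ; split=> x y z; case: (PQ x y z). Qed.

Section Trialgebra.
Variables (K : fieldType) (A : lmodType K) (l r m : A -> A -> A).
Hypotheses (l_bilinear : bilinear_op l) (r_bilinear : bilinear_op r)
           (m_bilinear : bilinear_op m).

(* [tri<k>] is relation (k). *)
Hypothesis tri1 : forall x y z, l (l x y) z = l x (l y z).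
Hypothesis tri2 : forall x y z, l (l x y) z = l x (r y z).
Hypothesis tri3 : forall x y z, l (r x y) z = r x (l y z).
Hypothesis tri4 : forall x y z, r (l x y) z = r x (r y z).
Hypothesis tri5 : forall x y z, r (r x y) z = r x (r y z).
Hypothesis tri6 : forall x y z, l (l x y) z = l x (m y z).
Hypothesis tri7 : forall x y z, l (m x y) z = m x (l y z).
Hypothesis tri8 : forall x y z, m (l x y) z = m x (r y z).
Hypothesis tri9 : forall x y z, m (r x y) z = r x (m y z).
Hypothesis tri10 : forall x y z, r (m x y) z = r x (r y z).

Definition bracket (x y : A) : A := l x y - r y x.

Lemma bracket_leibniz (x y z : A) :
  bracket (bracket x y) z = bracket (bracket x z) y + bracket x (bracket y z).
Proof.
rewrite /bracket !(bilinear_opBl l_bilinear) !(bilinear_opBr l_bilinear).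
rewrite !(bilinear_opBl r_bilinear) !(bilinear_opBr r_bilinear).
rewrite tri1 -tri2 tri3 tri3 tri5 tri4 !opprB !addrA.
by rewrite [RHS](@GRing.add A).[ACl (5*4*7*2*1*6*3*8)] !addrK.
Qed.

Lemma bracketMl (x y z : A) :
  bracket (m x y) z = m x (bracket y z) + m (bracket x z) y.
Proof.
rewrite /bracket (bilinear_opBr m_bilinear) (bilinear_opBl m_bilinear).
by rewrite tri7 -tri8 tri9 addrA subrK.
Qed.

Lemma bracket_commutator (x y z : A) :
  bracket x (m y z - m z y) = bracket x (bracket y z).
Proof.
rewrite /bracket (bilinear_opBr l_bilinear) (bilinear_opBl r_bilinear).
rewrite (bilinear_opBr l_bilinear) (bilinear_opBl r_bilinear).
by rewrite -tri6 tri1 -tri6 tri2 tri10 -tri4 tri10 -tri5.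
Qed.
End Trialgebra.

Theorem proposition1p16 (K : fieldType) (A : lmodType K)
  (l r m : A -> A -> A) :
  assoc_trialgebra l r m ->
  let br := fun x y : A => l x y - r y x in
  (forall x y z : A, m (m x y) z = m x (m y z)) /\
  (forall x y z : A, br (br x y) z = br (br x z) y + br x (br y z)) /\
  (forall x y z : A,
     br (m x y) z = m x (br y z) + m (br x z) y /\
     br x (m y z - m z y) = br x (br y z)).
Proof.
move=> [lB [rB [mB]]] /forall3_and[t1] /forall3_and[t2] /forall3_and[t3]
  /forall3_and[t4] /forall3_and[t5] /forall3_and[t6] /forall3_and[t7]
  /forall3_and[t8] /forall3_and[t9] /forall3_and[t10 t11] br.
split; first exact: t11.
split; first exact: bracket_leibniz lB rB t1 t2 t3 t4 t5.
move=> x y z; split; first exact: bracketMl mB t7 t8 t9 x y z.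
exact: bracket_commutator lB rB t1 t2 t4 t5 t6 t10 x y z.
Qed.
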